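(* Let $\mu$ be a Borel probability measure on a standard Borel space $X$ and let $\phi$ be a continuous unitary representation of $L^0(\mu,\mathbb T)$ on a separable complex Hilbert space. Then there is a finite Borel measure $\nu$ on $X$ such that: (i) $\nu\ll\mu$ and $\phi$ is the composition of the natural homomorphism $L^0(\mu,\mathbb T)\to L^0(\nu,\mathbb T)$ with a continuous unitary representation of $L^0(\nu,\mathbb T)$; (ii) whenever $\nu'$ is a finite Borel measure on $X$ with $\nu'\ll\mu$ such that $\phi$ is the composition of the natural homomorphism $L^0(\mu,\mathbb T)\to L^0(\nu',\mathbb T)$ with a continuous unitary representation of $L^0(\nu',\mathbb T)$, we have $\nu\ll\nu'$.
   Context: $\mathbb T$ is the unit circle in $\mathbb C$. $L^0(\mu,\mathbb T)$ is the group of $\mu$-equivalence classes of measurable functions $X\to\mathbb T$ with pointwise multiplication and the topology of convergence in measure. If $\nu\ll\mu$ are finite Borel measures, the natural homomorphism $L^0(\mu,\mathbb T)\to L^0(\nu,\mathbb T)$ sends the $\mu$-class of a Borel function to its $\nu$-class (well defined since the $\nu$-class contains the $\mu$-class). Unitary representations are strongly continuous. *)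

From HB Require Import structures.
From mathcomp Require Import all_boot all_order all_algebra.
From mathcomp Require Import all_classical all_reals.
From mathcomp Require Import topology normedtype measure lebesgue_measure.
From mathcomp.real_closed Require Import complex.
Set Implicit Arguments. Unset Strict Implicit. Unset Printing Implicit Defensive.
Import Order.TTheory GRing.Theory Num.Theory.
Local Open Scope classical_set_scope.
Local Open Scope ring_scope.

Section Defs.
Variable R : realType.
Local Notation C := (complex R).

(* A measurable space is standard Borel if its sigma-algebra is the Borel
   sigma-algebra of some Polish (separable, completely metrizable) topology.
   We present the Polish topology by a complete separable metric [dist]. *)
Definition metric_open {X : Type} (dist : X -> X -> R) (U : set X) : Prop :=
  forall x, U x -> exists2 r : R, 0 < r & forall y, dist x y < r -> U y.

Definition standard_borel {d} (X : measurableType d) : Prop :=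
  exists dist : X -> X -> R,
    [/\
        [/\ (forall x y, 0 <= dist x y),
             (forall x y, dist x y = 0 <-> x = y),
             (forall x y, dist x y = dist y x)
           & (forall x y z, dist x z <= dist x y + dist y z)],
        (forall u : nat -> X,
           (forall e : R, 0 < e -> exists N, forall m n, (N <= m)%N -> (N <= n)%N ->
              dist (u m) (u n) < e) ->
           exists l, forall e : R, 0 < e -> exists N, forall n, (N <= n)%N -> dist (u n) l < e),
        (exists D : set X, countable D /\
           forall x (e : R), 0 < e -> exists2 y, D y & dist x y < e)
      &
        (forall A : set X, measurable A <-> <<s metric_open dist >> A)].

Definition hnorm {H : lmodType C} (ip : H -> H -> C) (v : H) : R :=
  Num.sqrt (complex.Re (ip v v)).

Definition separable_hilbert {H : lmodType C} (ip : H -> H -> C) : Prop :=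
  [/\
      [/\ (forall (a : C) (u v w : H), ip (a *: u + v) w = a * ip u w + ip v w),
           (forall u v : H, ip v u = Num.conj (ip u v)),
           (forall v : H, 0 <= ip v v)
         & (forall v : H, ip v v = 0 -> v = 0)],
      (forall u : nat -> H,
         (forall e : R, 0 < e -> exists N, forall m n, (N <= m)%N -> (N <= n)%N ->
            hnorm ip (u m - u n) < e) ->
         exists l, forall e : R, 0 < e -> exists N, forall n, (N <= n)%N ->
            hnorm ip (u n - l) < e)
    &
      (exists s : nat -> H, forall v (e : R), 0 < e -> exists n, hnorm ip (v - s n) < e)].

Definition unitary {H : lmodType C} (ip : H -> H -> C) (U : H -> H) : Prop :=
  [/\ (forall (a : C) (u v : H), U (a *: u + v) = a *: U u + U v),
      (forall w : H, exists v, U v = w)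
    & (forall u v : H, ip (U u) (U v) = ip u v)].

(* Representatives: Borel functions X -> T (T = unit circle of C).  Elements of
   L^0(nu,T) are nu-a.e. classes of these; a map on L^0(nu,T) is represented by a
   map on representatives that is constant on nu-a.e. classes. *)
Definition L0T {d} {X : measurableType d} (f : X -> C) : Prop :=
  [/\ measurable_fun setT (fun x => complex.Re (f x)),
      measurable_fun setT (fun x => complex.Im (f x))
    & forall x, `|f x| = 1].

(* continuous unitary representation of L^0(nu,T) on (H, ip), given on
   representatives; L^0(nu,T) carries the topology of convergence in measure
   (basic neighbourhoods of f: {g | nu [|f - g| > eta] < eta}), and continuity
   is strong continuity. *)
Definition unitary_rep {d} {X : measurableType d} (nu : {measure set X -> \bar R})
    {H : lmodType C} (ip : H -> H -> C) (rho : (X -> C) -> H -> H) : Prop :=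
  [/\
      (forall f g : X -> C, L0T f -> L0T g -> {ae nu, forall x, f x = g x} -> rho f = rho g),
      (forall f : X -> C, L0T f -> unitary ip (rho f)),
      (forall f g : X -> C, L0T f -> L0T g -> rho (fun x => f x * g x) = rho f \o rho g)
    &
      (forall f : X -> C, L0T f -> forall (v : H) (e : R), 0 < e ->
         exists2 eta : R, 0 < eta & forall g : X -> C, L0T g ->
           (nu [set x | ((eta%:C)%C < `|f x - g x|)%R] < eta%:E)%E ->
           hnorm ip (rho g v - rho f v) < e)].

Definition factors_through {d} {X : measurableType d} (nu : {measure set X -> \bar R})
    {H : lmodType C} (ip : H -> H -> C) (phi : (X -> C) -> H -> H) : Prop :=
  exists psi : (X -> C) -> H -> H,
    unitary_rep nu ip psi /\ (forall f : X -> C, L0T f -> phi f = psi f).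

End Defs.

(* Call a measurable set S a carrier of phi if phi h is phi 1 whenever h = 1
   mu-a.e. on S.  Carriers form a family that contains X and is closed under
   countable intersections: for a nonincreasing sequence (S n), the function
   equal to 1 on S n and to h elsewhere converges in measure to h, and the
   fibres of a continuous representation are closed.  A carrier T of minimal
   measure is then essentially smallest, and nu := mu restricted to T works:
   phi factors through nu because T carries phi, and if phi factors through
   nu', then the complement of any nu'-null set is a carrier, hence contains T
   up to a mu-null set. *)

From HB Require Import structures.
From mathcomp Require Import all_boot all_order all_algebra.
From mathcomp Require Import all_classical all_reals.
From mathcomp Require Import topology normedtype measure lebesgue_measure probability.
From mathcomp Require Import measurable_realfun.
From mathcomp.real_closed Require Import complex.
Set Implicit Arguments. Unset Strict Implicit. Unset Printing Implicit Defensive.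
Import Order.TTheory GRing.Theory Num.Theory.
Local Open Scope classical_set_scope.
Local Open Scope ring_scope.

Lemma bigcap_closed_nonincreasing (T : Type) (F : set (set T)) :
  F setT -> (forall A B, F A -> F B -> F (A `&` B)) ->
  (forall S : nat -> set T, (forall n m, (n <= m)%N -> S m `<=` S n) ->
     (forall n, F (S n)) -> F (\bigcap_n S n)) ->
  forall S : nat -> set T, (forall n, F (S n)) -> F (\bigcap_n S n).
Proof.
move=> FT FI Fdecr S FS.
have -> : \bigcap_n S n = \bigcap_n (\bigcap_(i < n) S i).
  apply/seteqP; split => [x Sx n _ i _|x Sx i _]; first exact: Sx.
  exact: (Sx i.+1 I i (ltnSn i)).
apply: Fdecr => [n m nm x Sx i /= im|n]; first exact/Sx/(leq_trans im).
rewrite bigcap_mkord; elim: n => [|n IHn]; first by rewrite big_ord0.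
by rewrite big_ord_recr; apply: FI.
Qed.

Section essential_minimum.
Context d (X : measurableType d) (R : realType).
Variables (mu : {finite_measure set X -> \bar R}) (F : set (set X)).
Hypotheses (F_measurable : F `<=` measurable) (FsetT : F setT)
  (FI : forall A B, F A -> F B -> F (A `&` B))
  (Fbigcap : forall S : nat -> set X, (forall n, F (S n)) -> F (\bigcap_n S n)).

Lemma essential_minimum : exists2 T, F T & forall S, F S -> mu (T `\` S) = 0%E.
Proof.
have fin A : measurable A -> mu A \is a fin_num by exact: fin_num_measure.
pose E := [set fine (mu S) | S in F].
have hE : has_inf E.
  by split; [exists (fine (mu setT)), setT | exists 0 => _ [S _ <-]; exact: fine_ge0].
pose m := inf E.
have /choice[S HS] n : exists S, F S /\ fine (mu S) < m + n.+1%:R^-1.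
  have n0 : 0 < n.+1%:R^-1 :> R by rewrite invr_gt0.
  by have [_ [S FS <-] ?] := inf_adherent n0 hE; exists S.
have FS n : F (S n) by case: (HS n).
pose T := \bigcap_n S n.
have FT : F T by exact: Fbigcap.
exists T => // A FA.
have [mT mA] := (F_measurable FT, F_measurable FA).
have TleS n : fine (mu T) <= fine (mu (S n)).
  rewrite fine_le ?fin ?le_measure ?inE //; try exact: F_measurable.
  exact: bigcap_inf.
have Tlem : fine (mu T) <= m.
  rewrite leNgt; apply/negP => /ltr_add_invr[k].
  by apply/negP; rewrite -leNgt ltW // (le_lt_trans (TleS k)) //; case: (HS k).
have mleTA : m <= fine (mu (T `&` A)).
  by apply: (ge_inf hE.2); exists (T `&` A) => //; exact: FI.
have mTA : measurable (T `\` A) by exact: measurableD.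
have splitT : fine (mu T) = fine (mu (T `\` A)) + fine (mu (T `&` A)).
  by rewrite (measureDI _ mT mA) fineD ?fin //; exact: measurableI.
have le0 : fine (mu (T `\` A)) <= 0.
  by rewrite -(lerD2r (fine (mu (T `&` A)))) -splitT add0r (le_trans Tlem).
rewrite -[LHS]fineK ?fin //; congr (_%:E); apply/eqP.
by rewrite eq_le le0 fine_ge0.
Qed.

End essential_minimum.

Section L0T.
Context (R : realType) d (X : measurableType d).
Local Notation C := (complex R).

Lemma L0T1 : L0T (fun _ : X => 1 : C).
Proof. by split=> [||x]; [exact: measurable_cst|exact: measurable_cst|rewrite normr1]. Qed.

Lemma L0T_if (S : set X) (f g : X -> C) : measurable S -> L0T f -> L0T g ->
  L0T (fun x => if x \in S then f x else g x).
Proof.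
move=> mS [f1 f2 f3] [g1 g2 g3].
have mmemS : measurable_fun setT (fun x => x \in S).
  apply: (measurable_fun_bool true); rewrite setTI (_ : _ @^-1` _ = S) //.
  by apply/seteqP; split => x /=; [move/set_mem|move/mem_set].
have mif (k : C -> R) : measurable_fun setT (k \o f) -> measurable_fun setT (k \o g) ->
    measurable_fun setT (fun x => k (if x \in S then f x else g x)).
  move=> mf mg.
  rewrite (_ : (fun x => _) = fun x => if x \in S then k (f x) else k (g x)).
    exact: measurable_fun_ifT.
  by apply/funext => x; case: ifP.
by split; [exact: mif|exact: mif|move=> x; case: ifP].
Qed.

Lemma L0T_mul (f g : X -> C) : L0T f -> L0T g -> L0T (fun x => f x * g x).
Proof.
move=> [f1 f2 f3] [g1 g2 g3]; split.
- rewrite (_ : (fun x => _) = (fun x => complex.Re (f x)) \* (fun x => complex.Re (g x))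
     \- (fun x => complex.Im (f x)) \* (fun x => complex.Im (g x))).
    by apply: measurable_funB; apply: measurable_funM.
  by apply/funext => x /=; case: (f x); case: (g x).
- rewrite (_ : (fun x => _) = (fun x => complex.Re (f x)) \* (fun x => complex.Im (g x))
     \+ (fun x => complex.Im (f x)) \* (fun x => complex.Re (g x))).
    by apply: measurable_funD; apply: measurable_funM.
  by apply/funext => x /=; case: (f x); case: (g x).
- by move=> x; rewrite normrM f3 g3 mulr1.
Qed.

Lemma L0T_conj (f : X -> C) : L0T f -> L0T (fun x => (f x)^*%C).
Proof.
move=> [f1 f2 f3]; split.
- rewrite (_ : (fun x => _) = fun x => complex.Re (f x)) //.
  by apply/funext => x; case: (f x).
- rewrite (_ : (fun x => _) = \- (fun x => complex.Im (f x))).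
    exact: measurable_funN.
  by apply/funext => x /=; case: (f x).
- by move=> x; rewrite -(f3 x) !normc_def; case: (f x) => a b /=; rewrite sqrrN.
Qed.

Lemma measurable_dist_gt (f g : X -> C) (eta : R) : L0T f -> L0T g -> 0 < eta ->
  measurable [set x | (eta%:C)%C < `|f x - g x|].
Proof.
move=> [f1 f2 _] [g1 g2 _] eta0.
pose D2 := (fun x => (complex.Re (f x) - complex.Re (g x)) ^+ 2) \+
           (fun x => (complex.Im (f x) - complex.Im (g x)) ^+ 2).
have mD2 : measurable_fun setT D2.
  by apply: measurable_funD; apply: measurable_funX; apply: measurable_funB.
have key x : ((eta%:C)%C < `|f x - g x|) = (eta ^+ 2 < D2 x).
  rewrite normc_def ltcR /D2 !raddfB /= -{1}(ger0_norm (ltW eta0)) -sqrtr_sqr.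
  by rewrite ltNge ler_sqrt ?sqr_ge0 // -ltNge.
have -> : [set x | (eta%:C)%C < `|f x - g x|] = D2 @^-1` `]eta ^+ 2, +oo[.
  by apply/seteqP; split => x; rewrite /= key in_itv /= andbT.
by rewrite -[X in measurable X]setTI; exact: mD2.
Qed.

End L0T.

Lemma mulc_conj1 (R : realType) (z : complex R) : `|z| = 1 -> z * z^*%C = 1.
Proof. by move=> z1; rewrite -sqr_normc z1 expr1n. Qed.

Lemma hnorm_small_eq0 {R : realType} {H : lmodType (complex R)}
    {ip : H -> H -> complex R} : separable_hilbert ip ->
  forall w : H, (forall e : R, 0 < e -> hnorm ip w < e) -> w = 0.
Proof.
move=> [[_ _ ipge0 ipeq0] _ _] w small; apply: ipeq0.
have : hnorm ip w = 0.
  apply/eqP; rewrite eq_le sqrtr_ge0 andbT leNgt; apply/negP => /small.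
  by rewrite ltxx.
move/eqP; rewrite sqrtr_eq0 => Rele0.
have := ipge0 w; rewrite lecE /= => /andP[/eqP Im0 Rege0].
by apply/eqP; rewrite eq_complex /= Im0 eqxx andbT eq_le Rele0.
Qed.

Section carrier.
Context (R : realType) d (X : measurableType d).
Local Notation C := (complex R).
Variables (mu : {finite_measure set X -> \bar R}) (H : lmodType C) (ip : H -> H -> C).
Hypothesis Hip : separable_hilbert ip.
Variable phi : (X -> C) -> H -> H.
Hypothesis Hphi : unitary_rep mu ip phi.

Local Notation one := (fun _ : X => 1 : C).

Definition carries (S : set X) := measurable S /\ forall h : X -> C, L0T h ->
  mu.-negligible (S `&` [set x | h x != 1]) -> phi h = phi one.

Lemma phi_mul1 (g : X -> C) : L0T g -> phi g \o phi one = phi g.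
Proof.
case: Hphi => _ _ hom _ Lg; rewrite -hom //; last exact: L0T1.
by congr phi; apply/funext => x; rewrite mulr1.
Qed.

Lemma carries_eq (T : set X) (f g : X -> C) : carries T -> L0T f -> L0T g ->
  mu.-negligible (T `&` [set x | f x != g x]) -> phi f = phi g.
Proof.
move=> [_ cT] Lf Lg Nfg; have [_ _ g1] := Lg.
pose h x := f x * (g x)^*%C.
have Lh : L0T h by apply: L0T_mul => //; exact: L0T_conj.
have -> : f = fun x => g x * h x.
  by apply/funext => x; rewrite /h mulrCA mulc_conj1 ?mulr1.
case: Hphi => _ _ hom _; rewrite hom // (cT h) ?phi_mul1 //.
apply: negligibleS Nfg => x [Tx hx]; split => //; apply: contraNN hx => /eqP fg.
by rewrite /h fg mulc_conj1.
Qed.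

Lemma carriesT : carries setT.
Proof.
split => // h Lh Nh; case: Hphi => wd _ _ _.
apply: wd => //; first exact: L0T1.
by apply: negligibleS Nh => x /= hx; split => //; apply/eqP.
Qed.

(* h splits as the product of a function equal to 1 on S1 and one equal to 1
   off S1, the latter being 1 a.e. on S2. *)
Lemma carriesI (S1 S2 : set X) : carries S1 -> carries S2 -> carries (S1 `&` S2).
Proof.
move=> [mS1 cS1] [mS2 cS2]; split => [|h Lh Nh]; first exact: measurableI.
pose h1 x := if x \in S1 then 1 else h x.
pose h2 x := if x \in S1 then h x else 1.
have L1 : L0T h1 by apply: L0T_if => //; exact: L0T1.
have L2 : L0T h2 by apply: L0T_if => //; exact: L0T1.
have E1 : phi h1 = phi one.
  apply: cS1 => //; apply: negligibleS (negligible_set0 mu) => x [S1x].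
  by rewrite /= /h1 (mem_set S1x) eqxx.
have E2 : phi h2 = phi one.
  apply: cS2 => //; apply: negligibleS Nh => x [S2x] /=; rewrite /h2.
  by case: ifPn => [/set_mem S1x hx|]; rewrite ?eqxx.
have -> : h = fun x => h1 x * h2 x.
  by apply/funext => x; rewrite /h1 /h2; case: ifP; rewrite ?mul1r ?mulr1.
case: Hphi => _ _ hom _; rewrite hom // E1 E2 -hom; try exact: L0T1.
by congr phi; apply/funext => x; rewrite mulr1.
Qed.

Lemma rep_eq_of_approx (f g : X -> C) : L0T f ->
  (forall eta : R, 0 < eta -> exists2 g', L0T g' /\ phi g' = phi g &
     (mu [set x | ((eta%:C)%C < `|f x - g' x|)%R] < eta%:E)%E) ->
  phi f = phi g.
Proof.
move=> Lf approx; apply/funext => v; apply/eqP; rewrite eq_sym -subr_eq0; apply/eqP.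
apply: (hnorm_small_eq0 Hip) => e e0.
have [_ _ _ cont] := Hphi; have [eta eta0 Heta] := cont f Lf v e e0.
by have [g' [Lg' <-] small] := approx eta eta0; exact: Heta.
Qed.

Lemma carries_bigcap_nonincreasing (S : nat -> set X) :
  (forall n m, (n <= m)%N -> S m `<=` S n) -> (forall n, carries (S n)) ->
  carries (\bigcap_n S n).
Proof.
move=> Sdecr cS; have mS n : measurable (S n) by case: (cS n).
have mT : measurable (\bigcap_n S n) by exact: bigcapT_measurable.
split => // h Lh [N [mN muN hN]]; apply: rep_eq_of_approx => // eta eta0.
pose D n := S n `\` \bigcap_n S n.
have mD n : measurable (D n) by exact: measurableD.
have muD0 : (mu (D 0%N) < +oo)%E by rewrite -ge0_fin_numE ?fin_num_measure.
have Ddecr : {homo D : n m / (n <= m)%N >-> (m <= n)%O}.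
  by move=> n m nm; apply/subsetPset => x [Smx nT]; split => //; exact: Sdecr Smx.
have Dcap0 : \bigcap_n D n = set0.
  by apply/seteqP; split => // x Dx; have [_] := Dx 0%N I; apply => n _; case: (Dx n I).
have := nonincreasing_cvg_mu muD0 mD (bigcapT_measurable mD) Ddecr.
rewrite Dcap0 measure0 => /fine_cvgP[_ /cvgr_lt /(_ eta eta0)[M _ /(_ M (leqnn M))]].
rewrite /= => DM.
exists (fun x => if x \in S M then 1 else h x).
  split; first by apply: L0T_if => //; exact: L0T1.
  have [_ cSM] := cS M; apply: cSM; first by apply: L0T_if => //; exact: L0T1.
  by apply: negligibleS (negligible_set0 mu) => x [/mem_set SMx]; rewrite /= SMx eqxx.
have sub : [set x | (eta%:C)%C < `|h x - (if x \in S M then 1 else h x)|] `<=` D M `|` N.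
  move=> x /=; case: ifPn => [/set_mem SMx|]; last by rewrite subrr normr0 ltcR ltNge ltW.
  move=> hx; have [Tx|nTx] := pselect ((\bigcap_n S n) x); last by left.
  right; apply: hN; split => //; apply: contraTN hx => /eqP ->.
  by rewrite subrr normr0 ltcR -leNgt ltW.
apply: le_lt_trans (le_measure _ _ _ sub) _; rewrite ?inE //.
- by apply: measurable_dist_gt => //; apply: L0T_if => //; exact: L0T1.
- exact: measurableU.
apply: le_lt_trans (measureU2 _ _ _) _ => //.
rewrite [X in (_ + X < _)%E](_ : _ = 0%E) ?adde0; last exact: muN.
by rewrite -[X in (X < _)%E]fineK ?lte_fin ?fin_num_measure.
Qed.

Lemma carries_bigcap (S : nat -> set X) : (forall n, carries (S n)) ->
  carries (\bigcap_n S n).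
Proof.
apply: bigcap_closed_nonincreasing; [exact: carriesT|exact: carriesI|].
exact: carries_bigcap_nonincreasing.
Qed.

Lemma carries_unitary_rep (T : set X) (mT : measurable T) (Too : (mu T < +oo)%E) :
  carries T -> unitary_rep (mfrestr mT Too) ip phi.
Proof.
move=> cT; have [_ un hom cont] := Hphi.
have wd f g : L0T f -> L0T g -> {ae mfrestr mT Too, forall x, f x = g x} -> phi f = phi g.
  move=> Lf Lg [A [mA nuA fgA]]; apply: carries_eq cT Lf Lg _.
  exists (A `&` T); split => //; first exact: measurableI.
  by move=> x [Tx /eqP fg]; split => //; exact: fgA.
split => // f Lf v e e0; have [eta eta0 Heta] := cont f Lf v e e0.
exists eta => // g Lg small.
pose g' x := if x \in T then g x else f x.
have Lg' : L0T g' by exact: L0T_if.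
have <- : phi g' = phi g.
  apply: wd => //; exists (~` T); split; first exact: measurableC.
    by rewrite /mfrestr /mrestr setICl measure0.
  by move=> x /= g'g Tx; apply: g'g; rewrite /g' (mem_set Tx).
apply: Heta => //; apply: le_lt_trans small; apply: le_measure; rewrite ?inE.
- exact: measurable_dist_gt.
- by apply: measurableI => //; exact: measurable_dist_gt.
move=> x; rewrite /g' /=; case: ifPn => [/set_mem Tx|_]; first by split.
by rewrite subrr normr0 ltcR ltNge ltW.
Qed.

Lemma factors_through_carries (nu' : {measure set X -> \bar R}) (A : set X) :
  nu' `<< mu -> factors_through nu' ip phi -> measurable A -> nu' A = 0%E ->
  carries (~` A).
Proof.
move=> numu [psi [[wd' _ _ _] Epsi]] mA nu'A.
split => [|h Lh [B [mB muB hB]]]; first exact: measurableC.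
rewrite !Epsi //; last exact: L0T1.
apply: wd' => //; first exact: L0T1.
apply: (@negligibleS _ _ _ nu' (A `|` B)).
  move=> x /= hx; have [Ax|nAx] := pselect (A x); [by left|right].
  by apply: hB; split => //; apply/eqP => h1; exact: hx.
apply: negligibleU; first by exists A; split.
exists B; split => //; apply: (numu B) => //.
by apply/measure0_null_setP.
Qed.

End carrier.

Theorem mainTheorem2 (R : realType) (d : measure_display) (X : measurableType d)
    (HX : standard_borel R X) (mu : probability X R)
    (H : lmodType (complex R)) (ip : H -> H -> complex R) (Hip : separable_hilbert ip)
    (phi : (X -> complex R) -> H -> H) (Hphi : unitary_rep mu ip phi) :
  exists nu : {finite_measure set X -> \bar R},
    [/\ nu `<< mu,
        factors_through nu ip phi
      & forall nu' : {finite_measure set X -> \bar R},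
          nu' `<< mu -> factors_through nu' ip phi -> nu `<< nu'].
Proof.
have [T cT Tmin] : exists2 T, carries mu phi T &
    forall S, carries mu phi S -> mu (T `\` S) = 0%E.
  apply: essential_minimum => [S []//|||]; first exact: carriesT Hphi.
  - exact: carriesI Hphi.
  - by move=> S cS; exact: (carries_bigcap Hip Hphi cS).
have mT : measurable T by case: cT.
have Too : (mu T < +oo)%E by rewrite -ge0_fin_numE ?fin_num_measure.
exists (mfrestr mT Too); split.
- move=> N muN A mA AN; apply: muN; first exact: measurableI.
  by move=> x [/AN].
- by exists phi; split => //; exact: carries_unitary_rep.
- move=> nu' numu fnu' N nu'N A mA AN.
  have cA := factors_through_carries numu fnu' mA (nu'N A mA AN).
  by rewrite -(Tmin _ cA) setDE setCK setIC.
Qed.
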